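(* Let $\eta>0$ and $L>0$ be the strong monotonicity and Lipschitz constants of a mapping $F$ as in the context, let $\nu>0$, let $e_0>0$ with $\nu\ge L\sqrt{e_0/2}$, and let $\beta$ be a scalar with $0\le\beta<\frac{\eta}{L}$. Define error functions by $e_{k+1}(\delta_0,\dots,\delta_k)=(1-(\eta-\beta L)\delta_k)e_k(\delta_0,\dots,\delta_{k-1})+(1+\beta)^2\nu^2\delta_k^2$ for $k\ge0$, and let $\delta_0^*=\frac{\eta-\beta L}{2(1+\beta)^2\nu^2}e_0$, $\delta_k^*=\delta_{k-1}^*\big(1-\frac{\eta-\beta L}{2}\delta_{k-1}^*\big)$ for $k\ge1$. Then: (a) for all $k\ge0$, $e_k(\delta_0^*,\dots,\delta_{k-1}^* )=\frac{2(1+\beta)^2\nu^2}{\eta-\beta L}\delta_k^*$; (b) for any $k\ge1$, $(\delta_0^*,\dots,\delta_{k-1}^* )$ is the minimizer of $e_k$ over $\mathbb G_k\triangleq\{\alpha\in\mathbb R^k:0<\alpha_j\le\frac{\eta-\beta L}{(1+\beta)^2L^2},\ j=1,\dots,k\}$; more precisely, for any $(\delta_0,\dots,\delta_{k-1})\in\mathbb G_k$, $e_k(\delta_0,\dots,\delta_{k-1})-e_k(\delta_0^*,\dots,\delta_{k-1}^* )\ge(1+\beta)^2\nu^2(\delta_{k-1}-\delta_{k-1}^* )^2$.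
   Context: $F:X\to\mathbb R^n$ is a single-valued mapping on a nonempty closed convex set $X\subseteq\mathbb R^n$ which is Lipschitz continuous with constant $L$ ($\|F(x)-F(y)\|\le L\|x-y\|$) and strongly monotone with constant $\eta$ ($(F(x)-F(y))^T(x-y)\ge\eta\|x-y\|^2$) on $X$. *)

From HB Require Import structures.
From mathcomp Require Import all_boot all_order all_algebra.
From mathcomp Require Import reals.
Set Implicit Arguments. Unset Strict Implicit. Unset Printing Implicit Defensive.
Import Order.TTheory GRing.Theory Num.Theory.
Local Open Scope ring_scope.

Definition dotv {R : realType} {n : nat} (u v : 'rV[R]_n) : R :=
  \sum_(i < n) u 0 i * v 0 i.
Definition enorm {R : realType} {n : nat} (u : 'rV[R]_n) : R :=
  Num.sqrt (dotv u u).

Definition convex_set {R : realType} {n : nat} (X : 'rV[R]_n -> Prop) : Prop :=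
  forall x y t, X x -> X y -> 0 <= t -> t <= 1 -> X (t *: x + (1 - t) *: y).

Definition closed_set {R : realType} {n : nat} (X : 'rV[R]_n -> Prop) : Prop :=
  forall (u : nat -> 'rV[R]_n) (x : 'rV[R]_n),
    (forall m, X (u m)) ->
    (forall eps : R, 0 < eps -> exists N, forall m, (N <= m)%N -> enorm (u m - x) < eps) ->
    X x.

Definition lipschitz_on {R : realType} {n : nat} (X : 'rV[R]_n -> Prop)
  (F : 'rV[R]_n -> 'rV[R]_n) (L : R) : Prop :=
  forall x y, X x -> X y -> enorm (F x - F y) <= L * enorm (x - y).

Definition strongly_monotone_on {R : realType} {n : nat} (X : 'rV[R]_n -> Prop)
  (F : 'rV[R]_n -> 'rV[R]_n) (eta : R) : Prop :=
  forall x y, X x -> X y -> dotv (F x - F y) (x - y) >= eta * (enorm (x - y)) ^+ 2.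

(* e_k(delta_0,...,delta_{k-1}); only d 0, ..., d (k-1) are used. *)
Fixpoint err {R : realType} (eta beta L nu e0 : R) (d : nat -> R) (k : nat) : R :=
  match k with
  | 0 => e0
  | k'.+1 => (1 - (eta - beta * L) * d k') * err eta beta L nu e0 d k'
             + (1 + beta) ^+ 2 * nu ^+ 2 * (d k') ^+ 2
  end.

Fixpoint dstar {R : realType} (eta beta L nu e0 : R) (k : nat) : R :=
  match k with
  | 0 => (eta - beta * L) / (2 * (1 + beta) ^+ 2 * nu ^+ 2) * e0
  | k'.+1 => dstar eta beta L nu e0 k'
             * (1 - (eta - beta * L) / 2 * dstar eta beta L nu e0 k')
  end.

Definition in_Gk {R : realType} (eta beta L : R) (k : nat) (d : nat -> R) : Prop :=
  forall j, (j < k)%N -> 0 < d j /\ d j <= (eta - beta * L) / ((1 + beta) ^+ 2 * L ^+ 2).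

(** The recursion for [e_k] is affine in [e_k] with slope [1 - a d_k >= 0],
   where [a = eta - beta L], so [e_k] is monotone in the earlier steps and the
   steps can be optimised one at a time.  Along the optimal steps [x_k] one has
   [a e_k(x) = 2 c x_k] with [c = (1 + beta)^2 nu^2], which turns the gap into
   [e_{k+1}(d) - e_{k+1}(x) = (1 - a d_k) (e_k(d) - e_k(x)) + c (d_k - x_k)^2].
   The constraints on [beta] and [nu], together with [eta <= L] (forced by
   strong monotonicity and Lipschitz continuity on a set with two points),
   keep the [x_k] inside [G_k]. *)
From HB Require Import structures.
From mathcomp Require Import all_boot all_order all_algebra.
From mathcomp Require Import reals ring lra.
Set Implicit Arguments. Unset Strict Implicit. Unset Printing Implicit Defensive.
Import Order.TTheory GRing.Theory Num.Theory.
Local Open Scope ring_scope.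

Section StronglyMonotoneLipschitz.
Variables (R : realType) (n : nat).
Implicit Types (u v w : 'rV[R]_n).

Lemma dotv_ge0 u : 0 <= dotv u u.
Proof. by apply: sumr_ge0 => i _; rewrite -expr2 sqr_ge0. Qed.

Lemma enorm_sqr u : enorm u ^+ 2 = dotv u u.
Proof. by rewrite sqr_sqrtr // dotv_ge0. Qed.

Lemma dotv_self_eq0 u : dotv u u = 0 -> u = 0.
Proof.
move=> u0; apply/matrixP => i j; rewrite (ord1 i) mxE.
have : u 0 j * u 0 j = 0.
  by apply: (psumr_eq0P _ u0) => // k _; rewrite -expr2 sqr_ge0.
by move/eqP; rewrite mulf_eq0 orbb => /eqP.
Qed.

Lemma dotv_mul2_le (L : R) w v :
  2 * L * dotv w v <= dotv w w + L ^+ 2 * dotv v v.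
Proof.
rewrite -subr_ge0.
have -> : dotv w w + L ^+ 2 * dotv v v - 2 * L * dotv w v
          = \sum_i (w 0 i - L * v 0 i) ^+ 2.
  rewrite /dotv !mulr_sumr -big_split -sumrB /=.
  by apply: eq_bigr => i _; ring.
by apply: sumr_ge0 => i _; exact: sqr_ge0.
Qed.

Lemma strongly_monotone_le_lipschitz (X : 'rV[R]_n -> Prop)
    (F : 'rV[R]_n -> 'rV[R]_n) (eta L : R) :
  (exists x y, X x /\ X y /\ x <> y) -> 0 < L ->
  lipschitz_on X F L -> strongly_monotone_on X F eta -> eta <= L.
Proof.
move=> [x [y [Xx [Xy xy]]]] L_gt0 FL Feta.
have := FL x y Xx Xy; have := Feta x y Xx Xy; rewrite enorm_sqr.
set v := x - y; set w := F x - F y => mono lip.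
have vv_gt0 : 0 < dotv v v.
  rewrite lt_def dotv_ge0 andbT; apply/eqP => /dotv_self_eq0/eqP.
  by rewrite subr_eq0 => /eqP.
have ww_le : dotv w w <= L ^+ 2 * dotv v v.
  by rewrite -!enorm_sqr -exprMn !expr2; apply: ler_pM; rewrite ?sqrtr_ge0.
have wv_le : dotv w v <= L * dotv v v.
  rewrite -(ler_pM2l (_ : 0 < 2 * L)) ?mulr_gt0 //.
  apply: le_trans (dotv_mul2_le L w v) _.
  have -> : 2 * L * (L * dotv v v) = L ^+ 2 * dotv v v + L ^+ 2 * dotv v v.
    by ring.
  by rewrite lerD2r.
by rewrite -(ler_pM2r vv_gt0); apply: le_trans mono wv_le.
Qed.

End StronglyMonotoneLipschitz.

Section OptimalStepsizes.
Variables (R : realType) (eta beta L nu e0 : R).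

Local Notation a := (eta - beta * L).
Local Notation c := ((1 + beta) ^+ 2 * nu ^+ 2).
Local Notation B := ((eta - beta * L) / ((1 + beta) ^+ 2 * L ^+ 2)).
Local Notation e := (err eta beta L nu e0).
Local Notation x := (dstar eta beta L nu e0).

Lemma mul_err_dstar k : c != 0 -> a * e x k = 2 * c * x k.
Proof.
move=> c0; elim: k => [|k IH] /=.
  field; move: c0; rewrite mulf_eq0 !expf_eq0 /= negb_or => /andP[b0 nu0].
  by rewrite b0 nu0.
by rewrite mulrDr mulrCA IH; field.
Qed.

Lemma err_dstar k : a != 0 -> c != 0 ->
  e x k = 2 * (1 + beta) ^+ 2 * nu ^+ 2 / a * x k.
Proof.
move=> a0 c0; apply: (mulfI a0); rewrite mul_err_dstar //; field.
by rewrite a0.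
Qed.

Lemma err_sub_dstarS k d : c != 0 ->
  e d k.+1 - e x k.+1 = (1 - a * d k) * (e d k - e x k) + c * (d k - x k) ^+ 2.
Proof.
move=> c0; apply/eqP; rewrite -subr_eq0 /=.
move: (mul_err_dstar k c0); move: (e d k) (e x k) (d k) (x k) => Ed E t s opt.
have -> : (1 - a * t) * Ed + c * t ^+ 2 - ((1 - a * s) * E + c * s ^+ 2)
          - ((1 - a * t) * (Ed - E) + c * (t - s) ^+ 2)
          = (s - t) * (a * E - 2 * c * s) by ring.
by rewrite opt subrr mulr0.
Qed.

Hypotheses (a_gt0 : 0 < a) (aB_le1 : a * B <= 1).

Lemma dstar_in_range k : 0 < x 0 <= B -> 0 < x k <= B.
Proof.
move=> x0; elim: k => [|k /andP[xk_gt0 xk_le]] //=.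
have axk_le1 : a * x k <= 1 by apply: le_trans aB_le1; rewrite ler_pM2l.
have step_gt0 : 0 < 1 - a / 2 * x k.
  by rewrite mulrAC subr_gt0 ltr_pdivrMr //; lra.
apply/andP; split; first exact: mulr_gt0.
have half_ge0 : 0 <= a / 2 * x k by rewrite mulr_ge0 ?divr_ge0 // ltW.
by apply: le_trans xk_le; rewrite ler_piMr ?gerBl // ltW.
Qed.

Hypothesis c_gt0 : 0 < c.

Lemma err_step_gap k d : in_Gk eta beta L k.+1 d -> e x k <= e d k ->
  c * (d k - x k) ^+ 2 <= e d k.+1 - e x k.+1.
Proof.
move=> dG gap; have [dk_gt0 dk_le] := dG k (ltnSn k).
have adk_le1 : a * d k <= 1 by apply: le_trans aB_le1; rewrite ler_pM2l.
rewrite err_sub_dstarS ?lt0r_neq0 // lerDr.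
by apply: mulr_ge0; rewrite subr_ge0.
Qed.

Lemma err_dstar_le k d : in_Gk eta beta L k d -> e x k <= e d k.
Proof.
elim: k d => [|k IH] d dG //.
rewrite -subr_ge0; apply: le_trans (err_step_gap dG _); last first.
  by apply: IH => j /ltnW /dG.
by rewrite mulr_ge0 ?sqr_ge0 ?ltW.
Qed.

End OptimalStepsizes.

Lemma stepsize_bound_le1 (R : realType) (eta beta L : R) :
  0 < L -> eta <= L -> 0 <= beta -> 0 < eta - beta * L ->
  (eta - beta * L) * ((eta - beta * L) / ((1 + beta) ^+ 2 * L ^+ 2)) <= 1.
Proof.
move=> L_gt0 eta_le beta_ge0 a_gt0.
have a_le : eta - beta * L <= (1 + beta) * L by nra.
have a_lt := lt_le_trans a_gt0 a_le.
rewrite mulrA ler_pdivrMr ?mul1r -exprMn ?exprn_gt0 //.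
by rewrite expr2; apply: ler_pM => //; exact: ltW.
Qed.

Lemma dstar0_in_range (R : realType) (eta beta L nu e0 : R) :
  0 < L -> 0 < nu -> 0 < e0 -> L * Num.sqrt (e0 / 2) <= nu ->
  0 <= beta -> 0 < eta - beta * L ->
  0 < dstar eta beta L nu e0 0
    <= (eta - beta * L) / ((1 + beta) ^+ 2 * L ^+ 2).
Proof.
move=> L_gt0 nu_gt0 e0_gt0 nu_ge beta_ge0 a_gt0.
have b_gt0 : 0 < 1 + beta by lra.
apply/andP; split; first by rewrite /= !mulr_gt0 ?invr_gt0 ?mulr_gt0 ?exprn_gt0.
have nu2_ge : L ^+ 2 * (e0 / 2) <= nu ^+ 2.
  have s_ge0 := sqrtr_ge0 (e0 / 2).
  have : (L * Num.sqrt (e0 / 2)) ^+ 2 <= nu ^+ 2.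
    by rewrite !expr2; apply: ler_pM => //; apply: mulr_ge0 => //; exact: ltW.
  by rewrite exprMn sqr_sqrtr // divr_ge0 // ltW.
rewrite /= -mulrA ler_pM2l // mulrC ler_pdivrMr ?mulr_gt0 ?exprn_gt0 //.
rewrite mulrC ler_pdivlMr ?mulr_gt0 ?exprn_gt0 //.
have -> : e0 * ((1 + beta) ^+ 2 * L ^+ 2)
          = 2 * ((1 + beta) ^+ 2 * (L ^+ 2 * (e0 / 2))) by field.
by rewrite -[2 * _ * _]mulrA !ler_pM2l ?exprn_gt0.
Qed.

Theorem proposition4 (R : realType) (n : nat) (X : 'rV[R]_n -> Prop)
  (F : 'rV[R]_n -> 'rV[R]_n) (eta L nu e0 beta : R) :
  (exists x y, X x /\ X y /\ x <> y) ->
  convex_set X -> closed_set X ->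
  0 < eta -> 0 < L ->
  lipschitz_on X F L -> strongly_monotone_on X F eta ->
  0 < nu -> 0 < e0 -> L * Num.sqrt (e0 / 2) <= nu ->
  0 <= beta -> beta < eta / L ->
  (forall k : nat,
     err eta beta L nu e0 (dstar eta beta L nu e0) k
     = 2 * (1 + beta) ^+ 2 * nu ^+ 2 / (eta - beta * L) * dstar eta beta L nu e0 k)
  /\
  (forall k : nat, (1 <= k)%N ->
     in_Gk eta beta L k (dstar eta beta L nu e0) /\
     forall d : nat -> R, in_Gk eta beta L k d ->
       err eta beta L nu e0 d k - err eta beta L nu e0 (dstar eta beta L nu e0) k
       >= (1 + beta) ^+ 2 * nu ^+ 2 * (d k.-1 - dstar eta beta L nu e0 k.-1) ^+ 2).
Proof.
move=> two_pts _ _ eta_gt0 L_gt0 FL Feta nu_gt0 e0_gt0 nu_ge beta_ge0 beta_lt.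
have eta_le := strongly_monotone_le_lipschitz two_pts L_gt0 FL Feta.
have a_gt0 : 0 < eta - beta * L by rewrite subr_gt0 -ltr_pdivlMr.
have b_gt0 : 0 < 1 + beta by lra.
have c_gt0 : 0 < (1 + beta) ^+ 2 * nu ^+ 2 by rewrite mulr_gt0 ?exprn_gt0.
have aB_le1 := stepsize_bound_le1 L_gt0 eta_le beta_ge0 a_gt0.
have x0 := dstar0_in_range L_gt0 nu_gt0 e0_gt0 nu_ge beta_ge0 a_gt0.
split=> [k|[//|k] _]; first by rewrite err_dstar ?lt0r_neq0.
split=> [j _|d dG]; first by apply/andP; apply: dstar_in_range.
apply: (err_step_gap a_gt0 aB_le1 c_gt0 dG).
have dGk : in_Gk eta beta L k d by move=> j /ltnW /dG.
exact (err_dstar_le e0 a_gt0 aB_le1 c_gt0 dGk).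
Qed.
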